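(* Let $m,k,n\ge1$ be integers; let $\lambda_i,\mu_i>0$ ($i\le k$), $\alpha_j,\beta_j,u_j,v_j>0$ ($j\le n$); let $\theta:\{0,\dots,m\}\to\mathbb{R}$ satisfy $0\le\theta\le1$, $\theta(b)>0$ for $b<m$, $\theta(m)=0$. Consider the CTMC on the set $\mathcal{S}$ of vectors $(x_1,\dots,x_k;a_1,\dots,a_n)$, $x_i\in\mathbb{Z}_{\ge0}$, $a_j\in\{I,W,T\}$, with $\mathrm{busy}(w)=\sum_i x_i+\sum_j1_{\{a_j=T\}}\le m$, whose only nonzero rates are: $x\to x+e_i$ at rate $\lambda_i\theta(\mathrm{busy}(w))$ and $x+e_i\to x$ at rate $(x_i+1)\mu_i$; and, for each $j$ changing only $a_j$: $I\to W$ at rate $\alpha_j$, $W\to I$ at rate $\beta_j$, $W\to T$ at rate $u_j\theta(\mathrm{busy}(w))$ ($w$ the current state), $T\to W$ at rate $v_j$. Its steady state distribution is $p(w)=B\big(\prod_{r=0}^{\mathrm{busy}(w)-1}\theta(r)\big)\big(\prod_{i}\rho_i^{x_i}/x_i!\big)\prod_j(\alpha_j/\beta_j)^{1_{\{a_j=W\}}}(\alpha_ju_j/(\beta_jv_j))^{1_{\{a_j=T\}}}$ with normalizing constant $B$, where $\rho_i=\lambda_i/\mu_i$. For $a=(a_1,\dots,a_n)$ let $\mathrm{busy}_p(a)=\sum_{j=1}^n1_{\{a_j=T\}}$, and call $(x,a)$ with $x\in\mathbb{Z}_{\ge0}$ legitimate if $x+\mathrm{busy}_p(a)\le m$. Let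 $q(x;a_1,\dots,a_n)$ be the steady state probability that $\sum_{i=1}^kx_i=x$ and the persistent user states are $(a_1,\dots,a_n)$. Then for every legitimate $(x,a)$, $$q(x;a_1,\dots,a_n)=B\cdot\Big(\prod_{r=0}^{x+\mathrm{busy}_p(a)-1}\theta(r)\Big)\prod_{j=1}^n\Big(\frac{\alpha_j}{\beta_j}\Big)^{1_{\{a_j=W\}}}\Big(\frac{\alpha_ju_j}{\beta_jv_j}\Big)^{1_{\{a_j=T\}}}\frac{\rho^x}{x!},$$ with $\rho=\sum_{i=1}^k\rho_i$. Further, in the special case with no non-persistent users (the analogous CTMC on persistent states $a$ alone, i.e. $\rho\to0$), the steady state probability of $(a_1,\dots,a_n)$ is $$q(a_1,\dots,a_n)=B\cdot\Big(\prod_{r=0}^{\mathrm{busy}_p(a)-1}\theta(r)\Big)\prod_{j=1}^n\Big(\frac{\alpha_j}{\beta_j}\Big)^{1_{\{a_j=W\}}}\Big(\frac{\alpha_ju_j}{\beta_jv_j}\Big)^{1_{\{a_j=T\}}},$$ with $B$ the corresponding normalizing constant.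
   Context: Multi-channel access model with $m$ channels, $k$ classes of non-persistent users and $n$ persistent users with activity states Idle ($I$), Waiting ($W$), Transmitting ($T$). Empty products $\prod_{r=0}^{-1}\theta(r)$ equal $1$. *)

From HB Require Import structures.
From mathcomp Require Import all_boot all_order all_algebra.
From mathcomp Require Import reals.
Import Order.TTheory GRing.Theory Num.Theory.
Local Open Scope ring_scope.

Inductive act := Idle | Wait | Trans.

Definition act_to_ord (s : act) : 'I_3 :=
  match s with Idle => @Ordinal 3 0 isT | Wait => @Ordinal 3 1 isT | Trans => @Ordinal 3 2 isT end.
Definition ord_to_act (o : 'I_3) : act :=
  match val o with 0 => Idle | 1 => Wait | _ => Trans end.
Lemma act_to_ordK : cancel act_to_ord ord_to_act. Proof. by case. Qed.
HB.instance Definition _ := Finite.copy act (can_type act_to_ordK).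

Section Model.
Variable R : realType.
Variables (m k n : nat).
Variables (lam mu : 'I_k -> R) (alpha beta u v : 'I_n -> R) (theta : nat -> R).

(* Full states: (x_1..x_k ; a_1..a_n).  Each x_i is stored in 'I_(m+1); this is
   no restriction since a legitimate state has busy <= m, hence x_i <= m. *)
Definition state := ({ffun 'I_k -> 'I_m.+1} * {ffun 'I_n -> act})%type.

Definition busy_p (a : {ffun 'I_n -> act}) : nat := (\sum_(j < n) (a j == Trans))%N.
Definition nsum (x : {ffun 'I_k -> 'I_m.+1}) : nat := (\sum_(i < k) val (x i))%N.
Definition busy (w : state) : nat := (nsum w.1 + busy_p w.2)%N.
Definition valid (w : state) : bool := (busy w <= m)%N.

Definition trans_rate (j : 'I_n) (s t : act) (b : nat) : R :=
  match s, t with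
  | Idle, Wait => alpha j
  | Wait, Idle => beta j
  | Wait, Trans => u j * theta b
  | Trans, Wait => v j
  | _, _ => 0
  end.

Definition rate (w w' : state) : R :=
  \sum_(i < k)
     ( (([forall l, val (w'.1 l) == (val (w.1 l) + (l == i))%N] && (w'.2 == w.2)) %:R
          * (lam i * theta (busy w)))        (* x -> x + e_i *)
     + (([forall l, val (w.1 l) == (val (w'.1 l) + (l == i))%N] && (w'.2 == w.2)) %:R
          * ((val (w.1 i))%:R * mu i)) )     (* x'+e_i -> x' at rate (x'_i+1) mu_i *)
  + \sum_(j < n)
      (((w'.1 == w.1) && [forall l, (l != j) ==> (w'.2 l == w.2 l)]) %:R
         * trans_rate j (w.2 j) (w'.2 j) (busy w)).

Definition stationary (pi : state -> R) : Prop :=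
  [/\ forall w, 0 <= pi w,
      forall w, ~~ valid w -> pi w = 0,
      \sum_(w | valid w) pi w = 1
    & forall w, valid w ->
        \sum_(w' | valid w') pi w' * rate w' w = pi w * \sum_(w' | valid w') rate w w'].

Definition theta_prod (b : nat) : R := \prod_(r < b) theta r.

Definition pers_weight (a : {ffun 'I_n -> act}) : R :=
  \prod_(j < n) ((alpha j / beta j) ^+ (a j == Wait)
                 * (alpha j * u j / (beta j * v j)) ^+ (a j == Trans)).

Definition rho (i : 'I_k) : R := lam i / mu i.
Definition rho_sum : R := \sum_(i < k) rho i.

Definition weight (w : state) : R :=
  theta_prod (busy w)
  * (\prod_(i < k) (rho i ^+ val (w.1 i) / ((val (w.1 i))`!)%:R))
  * pers_weight w.2.

Definition normB : R := (\sum_(w | valid w) weight w)^-1.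

Definition marginal (pi : state -> R) (x : nat) (a : {ffun 'I_n -> act}) : R :=
  \sum_(w | valid w && (nsum w.1 == x) && (w.2 == a)) pi w.

Definition pstate := {ffun 'I_n -> act}.
Definition pvalid (a : pstate) : bool := (busy_p a <= m)%N.
Definition prate (a a' : pstate) : R :=
  \sum_(j < n) ([forall l, (l != j) ==> (a' l == a l)]%:R
                 * trans_rate j (a j) (a' j) (busy_p a)).
Definition pstationary (pi : pstate -> R) : Prop :=
  [/\ forall a, 0 <= pi a,
      forall a, ~~ pvalid a -> pi a = 0,
      \sum_(a | pvalid a) pi a = 1
    & forall a, pvalid a ->
        \sum_(a' | pvalid a') pi a' * prate a' a = pi a * \sum_(a' | pvalid a') prate a a'].
Definition pweight (a : pstate) : R := theta_prod (busy_p a) * pers_weight a.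
Definition pnormB : R := (\sum_(a | pvalid a) pweight a)^-1.

End Model.

Arguments busy_p {n}.

From HB Require Import structures.
From mathcomp Require Import all_boot all_order all_algebra.
From mathcomp Require Import reals.
From mathcomp Require Import ring.
Import Order.TTheory GRing.Theory Num.Theory.
Local Open Scope ring_scope.

(* The product form [weight] is in detailed balance with the rates: an arrival
   x -> x + e_i is balanced by the matching departure, a persistent move
   a_j : s -> t by the reverse move, the factor theta(busy) of each transition
   being absorbed by the product of thetas.  So for a stationary pi the ratio
   pi / weight is harmonic for the generator.  Every legitimate state reaches the
   empty state through departures and T -> W -> I moves, each lowering a
   potential, so the maximum principle (applied to the ratio and to its
   opposite) makes the ratio constant: pi is the normalised product form.  The
   marginal q(x; a) then sums product forms over the counts of total x, which the
   multinomial theorem collapses to rho^x / x!. *)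

Section ReversibleChain.
Variables (R : realFieldType) (S : finType) (valid : pred S).
Variables (q : S -> S -> R) (wt : S -> R) (pot : S -> nat) (o : S).
Hypothesis valid_o : valid o.
Hypothesis q_ge0 : forall s t, valid s -> valid t -> 0 <= q s t.
Hypothesis wt_gt0 : forall s, valid s -> 0 < wt s.
Hypothesis detailed_balance :
  forall s t, valid s -> valid t -> wt s * q s t = wt t * q t s.
Hypothesis descent : forall s, valid s -> s != o ->
  exists t, [/\ valid t, (pot t < pot s)%N & 0 < q s t].

Definition harmonic (h : S -> R) :=
  forall s, valid s -> \sum_(t | valid t) q s t * (h t - h s) = 0.

Lemma harmonicN {h} : harmonic h -> harmonic (fun s => - h s).
Proof.
move=> hh s Vs; transitivity (- \sum_(t | valid t) q s t * (h t - h s)).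
  by rewrite -sumrN; apply: eq_bigr => t _; ring.
by rewrite hh ?oppr0.
Qed.

Lemma harmonic_eq_at_max {h s t} : harmonic h -> valid s ->
  (forall t, valid t -> h t <= h s) -> valid t -> 0 < q s t -> h t = h s.
Proof.
move=> hh Vs hmax Vt qst.
have /psumr_eq0P sum0 : \sum_(t | valid t) q s t * (h s - h t) = 0.
  by have /= := harmonicN hh s Vs; under eq_bigr do rewrite opprK addrC.
have nonneg t' : valid t' -> 0 <= q s t' * (h s - h t').
  by move=> Vt'; rewrite mulr_ge0 ?q_ge0 // subr_ge0 hmax.
by have /eqP := sum0 nonneg t Vt; rewrite mulf_eq0 gt_eqF //= subr_eq0 => /eqP.
Qed.

Lemma harmonic_max_at_root {h s} : harmonic h -> valid s ->
  (forall t, valid t -> h t <= h s) -> h o = h s.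
Proof.
move=> hh; elim: (pot s).+1 {-2}s (ltnSn (pot s)) => // N IH {}s ltsN Vs hmax.
have [-> //|s_neq_o] := eqVneq s o.
have [t [Vt ltts qst]] := descent s Vs s_neq_o.
have hts := harmonic_eq_at_max hh Vs hmax Vt qst.
rewrite -hts (IH t) ?(leq_trans ltts) // => t' Vt'.
by rewrite hts hmax.
Qed.

Lemma harmonic_const {h s} : harmonic h -> valid s -> h s = h o.
Proof.
move=> hh Vs.
have [smax Vmax hmax] := arg_maxP h valid_o.
have [smin Vmin hmin] := arg_minP h valid_o.
have homax := harmonic_max_at_root hh Vmax hmax.
have homin : h o = h smin.
  apply: oppr_inj; apply: harmonic_max_at_root (harmonicN hh) Vmin _ => t Vt.
  by rewrite lerN2 hmin.
apply/eqP; rewrite eq_le; apply/andP; split.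
  by rewrite homax; apply: hmax.
by rewrite homin; apply: hmin.
Qed.

Lemma stationary_ratio_harmonic pi :
  (forall s, valid s ->
     \sum_(t | valid t) pi t * q t s = pi s * \sum_(t | valid t) q s t) ->
  harmonic (fun s => pi s / wt s).
Proof.
move=> balance s Vs.
have wtN0 t : valid t -> wt t != 0 by move=> Vt; rewrite gt_eqF ?wt_gt0.
apply: (mulfI (wtN0 s Vs)); rewrite mulr0 mulr_sumr.
under eq_bigr => t Vt.
  rewrite mulrA mulrBr {1}detailed_balance //.
  have -> : wt t * q t s * (pi t / wt t) - wt s * q s t * (pi s / wt s)
            = pi t * q t s - pi s * q s t by field; rewrite ?wtN0.
over.
by rewrite sumrB balance // mulr_sumr subrr.
Qed.

Theorem reversible_stationaryE pi :
  \sum_(s | valid s) pi s = 1 ->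
  (forall s, valid s ->
     \sum_(t | valid t) pi t * q t s = pi s * \sum_(t | valid t) q s t) ->
  forall s, valid s -> pi s = (\sum_(t | valid t) wt t)^-1 * wt s.
Proof.
move=> pi_sum1 balance s Vs.
have hh := stationary_ratio_harmonic pi balance.
set c := pi o / wt o.
have piE t : valid t -> pi t = c * wt t.
  by move=> Vt; rewrite /c -(harmonic_const hh Vt) divfK // gt_eqF ?wt_gt0.
have sum_gt0 : 0 < \sum_(t | valid t) wt t.
  rewrite (bigD1 o) //= ltr_pwDl ?wt_gt0 // sumr_ge0 // => t /andP[Vt _].
  exact/ltW/wt_gt0.
have : c * \sum_(t | valid t) wt t = 1.
  by rewrite -pi_sum1 mulr_sumr; apply: eq_bigr => t Vt; rewrite -piE.
by move=> /(canRL (mulfK (lt0r_neq0 sum_gt0))); rewrite mul1r piE // => ->.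
Qed.

End ReversibleChain.

Section Multinomial.
Variable R : numFieldType.

Lemma natr_fact_neq0 n : (n`!)%:R != 0 :> R.
Proof. by rewrite pnatr_eq0 -lt0n fact_gt0. Qed.

Definition exp_trunc (m : nat) (a : R) : {poly R} := \poly_(c < m.+1) (a ^+ c / (c`!)%:R).

Lemma coef_prod_exp_trunc m k (r : 'I_k -> R) N : (N <= m)%N ->
  (\prod_(i < k) exp_trunc m (r i))`_N = (\sum_(i < k) r i) ^+ N / (N`!)%:R.
Proof.
elim: k r N => [|k IH] r N Nm.
  by rewrite !big_ord0 coef1 expr0n; case: N {Nm} => [|N] /=; rewrite ?divr1 ?mul0r.
rewrite big_ord_recr big_ord_recr /= coefM addrC exprDn mulr_suml.
apply: eq_bigr => i _.
have iN : (i <= N)%N by rewrite -ltnS.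
rewrite IH ?(leq_trans iN) // coef_poly ltnS (leq_trans (leq_subr _ _) Nm).
have binN0 : ('C(N, i))%:R != 0 :> R by rewrite pnatr_eq0 -lt0n bin_gt0.
rewrite -(bin_fact iN) !natrM -mulr_natr.
by field; rewrite binN0 !natr_fact_neq0.
Qed.

Lemma sum_multinomial m k (r : 'I_k -> R) N : (N <= m)%N ->
  \sum_(y : {ffun 'I_k -> 'I_m.+1} | (\sum_(i < k) val (y i) == N)%N)
     \prod_(i < k) (r i ^+ val (y i) / ((val (y i))`!)%:R)
  = (\sum_(i < k) r i) ^+ N / (N`!)%:R.
Proof.
move=> Nm; rewrite -(coef_prod_exp_trunc _ _ r _ Nm).
have -> : \prod_(i < k) exp_trunc m (r i) =
    \sum_(y : {ffun 'I_k -> 'I_m.+1})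
      (\prod_(i < k) (r i ^+ val (y i) / ((val (y i))`!)%:R))
        *: 'X^(\sum_(i < k) val (y i)).
  under eq_bigr do rewrite /exp_trunc poly_def.
  rewrite bigA_distr_bigA; apply: eq_bigr => y _.
  rewrite -prodrXr -!mul_polyC rmorph_prod -big_split /=.
  by apply: eq_bigr => i _; rewrite mul_polyC.
by rewrite coef_sumMXn.
Qed.

End Multinomial.

Section MultiChannelModel.
Variables (R : realType) (m n : nat) (alpha beta u v : 'I_n -> R) (theta : nat -> R).
Hypotheses (alpha_gt0 : forall j, 0 < alpha j) (beta_gt0 : forall j, 0 < beta j).
Hypotheses (u_gt0 : forall j, 0 < u j) (v_gt0 : forall j, 0 < v j).
Hypothesis theta_ge0 : forall b, (b <= m)%N -> 0 <= theta b.
Hypothesis theta_gt0 : forall b, (b < m)%N -> 0 < theta b.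

Notation tr := (trans_rate R n alpha beta u v theta).
Notation tp := (theta_prod R theta).
Notation pw := (pers_weight R n alpha beta u v).

Lemma theta_prodS b : tp b.+1 = tp b * theta b.
Proof. by rewrite /theta_prod big_ord_recr. Qed.

Lemma theta_prod_gt0 b : (b <= m)%N -> 0 < tp b.
Proof. by move=> bm; apply: prodr_gt0 => r _; apply: theta_gt0; apply: leq_trans bm. Qed.

Definition act_weight j (s : act) : R :=
  (alpha j / beta j) ^+ (s == Wait) * (alpha j * u j / (beta j * v j)) ^+ (s == Trans).

Lemma pers_weight_gt0 a : 0 < pw a.
Proof.
apply: prodr_gt0 => j _.
by rewrite mulr_gt0 // exprn_gt0 // ?divr_gt0 ?mulr_gt0.
Qed.

Lemma trans_rate_ge0 j s t b : (b <= m)%N -> 0 <= tr j s t b.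
Proof.
move=> bm; have theta_b_ge0 := theta_ge0 _ bm.
case: s; case: t; rewrite /= ?lexx //; try exact: ltW.
exact: mulr_ge0 (ltW (u_gt0 j)) theta_b_ge0.
Qed.

Lemma trans_rate_balance j s t c :
  tp (c + (s == Trans)) * act_weight j s * tr j s t (c + (s == Trans)) =
  tp (c + (t == Trans)) * act_weight j t * tr j t s (c + (t == Trans)).
Proof.
have bN0 : beta j != 0 by rewrite gt_eqF.
have vN0 : v j != 0 by rewrite gt_eqF.
rewrite /act_weight; case: s; case: t => //=;
  rewrite ?addn0 ?addn1 ?theta_prodS ?expr0 ?expr1 ?mul1r ?mulr1 ?mulr0 //;
  by field; rewrite ?bN0 ?vN0.
Qed.

(* [c] is the number of channels held by non-persistent users. *)
Definition pers_rate (c : nat) (a a' : {ffun 'I_n -> act}) : R :=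
  \sum_(j < n) [forall l, (l != j) ==> (a' l == a l)]%:R
                 * tr j (a j) (a' j) (c + busy_p a).

Lemma pers_rate_ge0 c a a' : (c + busy_p a <= m)%N -> 0 <= pers_rate c a a'.
Proof. by move=> bm; rewrite sumr_ge0 // => j _; rewrite mulr_ge0 ?trans_rate_ge0. Qed.

Lemma pers_move_balance c (a a' : {ffun 'I_n -> act}) j :
  (forall l, l != j -> a' l = a l) ->
  tp (c + busy_p a) * pw a * tr j (a j) (a' j) (c + busy_p a) =
  tp (c + busy_p a') * pw a' * tr j (a' j) (a j) (c + busy_p a').
Proof.
move=> a'E.
have busyE (b : {ffun 'I_n -> act}) : (forall l, l != j -> b l = a l) ->
    (c + busy_p b = c + \sum_(l < n | l != j) (a l == Trans) + (b j == Trans))%N.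
  move=> bE; rewrite /busy_p (bigD1 j) //=.
  under eq_bigr => l lj do rewrite (bE l lj).
  by rewrite addnA addnAC.
have pwE (b : {ffun 'I_n -> act}) : (forall l, l != j -> b l = a l) ->
    pw b = act_weight j (b j) * \prod_(l < n | l != j) act_weight l (a l).
  move=> bE; rewrite /pers_weight (bigD1 j) //=.
  by under eq_bigr => l lj do rewrite (bE l lj).
rewrite !busyE ?pwE //; set X := (c + _)%N; set P := \prod_(l < n | l != j) _.
transitivity (P * (tp (X + (a j == Trans)) * act_weight j (a j)
                     * tr j (a j) (a' j) (X + (a j == Trans)))); first ring.
by rewrite trans_rate_balance; ring.
Qed.

Lemma pers_rate_balance c a a' :
  tp (c + busy_p a) * pw a * pers_rate c a a' =
  tp (c + busy_p a') * pw a' * pers_rate c a' a.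
Proof.
rewrite /pers_rate !mulr_sumr; apply: eq_bigr => j _.
have -> : [forall l, (l != j) ==> (a l == a' l)] = [forall l, (l != j) ==> (a' l == a l)].
  by apply: eq_forallb => l; rewrite [a l == _]eq_sym.
have [/forallP a'E|_] := boolP [forall l, (l != j) ==> (a' l == a l)]; last first.
  by rewrite !mul0r !mulr0.
rewrite !mul1r; apply: pers_move_balance => l lj.
by apply/eqP; move/implyP: (a'E l); apply.
Qed.

Definition lower_act (s : act) : act := if s is Trans then Wait else Idle.

Definition act_rank (s : act) : nat :=
  match s with Idle => 0 | Wait => 1 | Trans => 2 end.

Definition lower_at (a : {ffun 'I_n -> act}) j : {ffun 'I_n -> act} :=
  [ffun l => if l == j then lower_act (a j) else a l].

Definition pers_rank (a : {ffun 'I_n -> act}) : nat := \sum_(j < n) act_rank (a j).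

Lemma lower_at_out (a : {ffun 'I_n -> act}) j l : l != j -> lower_at a j l = a l.
Proof. by rewrite ffunE => /negbTE ->. Qed.

Lemma lower_at_in (a : {ffun 'I_n -> act}) j : lower_at a j j = lower_act (a j).
Proof. by rewrite ffunE eqxx. Qed.

Lemma busy_p_lower_at (a : {ffun 'I_n -> act}) j : (busy_p (lower_at a j) <= busy_p a)%N.
Proof.
rewrite /busy_p (bigD1 j) // [X in (_ <= X)%N](bigD1 j) //= lower_at_in.
under eq_bigr => l lj do rewrite lower_at_out //.
by rewrite leq_add2r; case: (a j).
Qed.

Lemma pers_rank_lower_at (a : {ffun 'I_n -> act}) j :
  a j != Idle -> (pers_rank (lower_at a j) < pers_rank a)%N.
Proof.
rewrite /pers_rank (bigD1 j) // [X in (_ < X)%N](bigD1 j) //= lower_at_in.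
under eq_bigr => l lj do rewrite lower_at_out //.
by rewrite ltn_add2r; case: (a j).
Qed.

Lemma pers_rate_lower_at_gt0 c (a : {ffun 'I_n -> act}) j :
  (c + busy_p a <= m)%N -> a j != Idle -> 0 < pers_rate c a (lower_at a j).
Proof.
move=> bm aj; rewrite /pers_rate (bigD1 j) //=; apply: ltr_wpDr.
- by rewrite sumr_ge0 // => l _; rewrite mulr_ge0 ?trans_rate_ge0.
- have -> : [forall l, (l != j) ==> (lower_at a j l == a l)].
    by apply/forallP => l; apply/implyP => lj; rewrite lower_at_out.
  by rewrite mul1r lower_at_in; case: (a j) aj => //= _.
Qed.

Definition pers_origin : {ffun 'I_n -> act} := [ffun => Idle].

Lemma pers_rate_descent c a : (c + busy_p a <= m)%N -> a != pers_origin ->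
  exists2 j, (pers_rank (lower_at a j) < pers_rank a)%N
           & 0 < pers_rate c a (lower_at a j).
Proof.
move=> bm a_neq_o.
have [/existsP[j aj] | /existsPn a0] := boolP [exists j, a j != Idle].
  by exists j; [apply: pers_rank_lower_at | apply: pers_rate_lower_at_gt0].
case/negP: a_neq_o; apply/eqP/ffunP => j; rewrite ffunE.
by apply/eqP; rewrite -[_ == _]negbK a0.
Qed.

Notation pweight := (pweight R n alpha beta u v theta).
Notation prate := (prate R n alpha beta u v theta).

Lemma prateE a a' : prate a a' = pers_rate 0 a a'.
Proof. by []. Qed.

Lemma pweight_gt0 a : pvalid m n a -> 0 < pweight a.
Proof. by move=> Va; rewrite mulr_gt0 ?theta_prod_gt0 ?pers_weight_gt0. Qed.

Lemma pvalid_origin : pvalid m n pers_origin.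
Proof. by rewrite /pvalid /busy_p big1 // => j _; rewrite ffunE. Qed.

Theorem pstationaryE pi : pstationary R m n alpha beta u v theta pi ->
  forall a, pvalid m n a -> pi a = pnormB R m n alpha beta u v theta * pweight a.
Proof.
case=> _ _ pi_sum1 balance.
apply: (reversible_stationaryE _ _ _ prate pweight pers_rank _ pvalid_origin) => // a.
- by move=> a' Va _; rewrite prateE pers_rate_ge0.
- exact: pweight_gt0.
- by move=> a' _ _; rewrite !prateE (pers_rate_balance 0).
- move=> Va a_neq_o; have [j lt_rank rate_gt0] := pers_rate_descent 0 a Va a_neq_o.
  by exists (lower_at a j); split=> //; apply: leq_trans (busy_p_lower_at a j) Va.
Qed.

Variables (k : nat) (lam mu : 'I_k -> R).
Hypotheses (lam_gt0 : forall i, 0 < lam i) (mu_gt0 : forall i, 0 < mu i).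

Notation state := (state m k n).
Notation valid := (valid m k n).
Notation busy := (busy m k n).
Notation nsum := (nsum m k).
Notation rho := (rho R k lam mu).
Notation weight := (weight R m k n lam mu alpha beta u v theta).
Notation rate := (rate R m k n lam mu alpha beta u v theta).

Definition succ_at (i : 'I_k) (y y' : {ffun 'I_k -> 'I_m.+1}) : bool :=
  [forall l : 'I_k, val (y' l) == (val (y l) + (l == i))%N].

Definition count_term (w w' : state) (i : 'I_k) : R :=
  (succ_at i w.1 w'.1 && (w'.2 == w.2))%:R * (lam i * theta (busy w))
  + (succ_at i w'.1 w.1 && (w'.2 == w.2))%:R * ((val (w.1 i))%:R * mu i).

Definition count_rate (w w' : state) : R := \sum_(i < k) count_term w w' i.

Lemma rateE w w' :
  rate w w' = count_rate w w' + (w'.1 == w.1)%:R * pers_rate (nsum w.1) w.2 w'.2.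
Proof.
rewrite /rate /pers_rate mulr_sumr; congr (_ + _); apply: eq_bigr => j _.
by case: (w'.1 == w.1); rewrite ?mul1r ?mul0r.
Qed.

Definition count_weight (y : {ffun 'I_k -> 'I_m.+1}) : R :=
  \prod_(i < k) (rho i ^+ val (y i) / ((val (y i))`!)%:R).

Lemma weightE w : weight w = tp (nsum w.1 + busy_p w.2) * count_weight w.1 * pw w.2.
Proof. by []. Qed.

Lemma count_weight_gt0 y : 0 < count_weight y.
Proof.
apply: prodr_gt0 => i _.
by rewrite divr_gt0 ?exprn_gt0 ?divr_gt0 // ltr0n fact_gt0.
Qed.

Lemma weight_gt0 w : valid w -> 0 < weight w.
Proof.
move=> Vw; rewrite weightE !mulr_gt0 ?count_weight_gt0 ?pers_weight_gt0 //.
exact: theta_prod_gt0.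
Qed.

Lemma nsum_succ_at {i y y'} : succ_at i y y' -> nsum y' = (nsum y).+1.
Proof.
move=> /forallP y'E; rewrite /nsum (eq_bigr _ (fun l _ => eqP (y'E l))) big_split /=.
rewrite -[in RHS]addn1; congr (_ + _)%N.
by rewrite (bigD1 i) //= eqxx big1 // => l /negbTE ->.
Qed.

Lemma count_weight_succ_at {i y y'} : succ_at i y y' ->
  count_weight y' = count_weight y * (rho i / (val (y' i))%:R).
Proof.
move=> /forallP y'E; have y'lE l : val (y' l) = (val (y l) + (l == i))%N by apply/eqP.
rewrite /count_weight (bigD1 i) // [in RHS](bigD1 i) //= y'lE eqxx addn1.
under eq_bigr => l /negbTE li do rewrite y'lE li addn0.
rewrite factS natrM exprS.
have xS_neq0 : 1 + (val (y i))%:R != 0 :> R by rewrite nat1r pnatr_eq0.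
by field; rewrite xS_neq0 natr_fact_neq0.
Qed.

Lemma arrival_balance (s t : state) i :
  weight s * ((succ_at i s.1 t.1 && (t.2 == s.2))%:R * (lam i * theta (busy s))) =
  weight t * ((succ_at i s.1 t.1 && (s.2 == t.2))%:R * ((val (t.1 i))%:R * mu i)).
Proof.
rewrite [s.2 == t.2]eq_sym.
have [/andP[succ /eqP t2E]|_] := boolP (_ && _); last by rewrite !mul0r !mulr0.
have ti_neq0 : (val (t.1 i))%:R != 0 :> R.
  by move/forallP/(_ i)/eqP: succ; rewrite eqxx addn1 => ->; rewrite pnatr_eq0.
have mu_neq0 : mu i != 0 by rewrite gt_eqF.
rewrite !mul1r !weightE t2E (nsum_succ_at succ) (count_weight_succ_at succ) addSn.
by rewrite theta_prodS /rho; field; rewrite ?ti_neq0 ?mu_neq0.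
Qed.

Lemma rate_detailed_balance s t : weight s * rate s t = weight t * rate t s.
Proof.
rewrite !rateE !mulrDr; congr (_ + _).
  rewrite /count_rate /count_term !mulr_sumr.
  rewrite !(eq_bigr _ (fun i _ => mulrDr _ _ _)) !big_split /=.
  by rewrite [RHS]addrC; congr (_ + _); apply: eq_bigr => i _; rewrite arrival_balance.
rewrite [s.1 == t.1]eq_sym; have [t1E|_] := eqVneq t.1 s.1; last by rewrite !mul0r !mulr0.
rewrite !weightE t1E !mul1r.
transitivity (count_weight s.1 *
  (tp (nsum s.1 + busy_p s.2) * pw s.2 * pers_rate (nsum s.1) s.2 t.2)); first ring.
by rewrite pers_rate_balance; ring.
Qed.

Lemma count_term_ge0 s t i : valid s -> 0 <= count_term s t i.
Proof.
move=> Vs; have lam_ge0 := ltW (lam_gt0 i); have mu_ge0 := ltW (mu_gt0 i).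
by rewrite /count_term addr_ge0 ?mulr_ge0 ?ler0n ?theta_ge0.
Qed.

Lemma count_rate_ge0 s t : valid s -> 0 <= count_rate s t.
Proof. by move=> Vs; rewrite sumr_ge0 // => i _; rewrite count_term_ge0. Qed.

Lemma rate_ge0 s t : valid s -> 0 <= rate s t.
Proof. by move=> Vs; rewrite rateE addr_ge0 ?count_rate_ge0 ?mulr_ge0 ?pers_rate_ge0. Qed.

Definition pred_at (y : {ffun 'I_k -> 'I_m.+1}) (i : 'I_k) : {ffun 'I_k -> 'I_m.+1} :=
  [ffun l : 'I_k => inord (val (y l) - (l == i))].

Lemma succ_at_pred_at {y : {ffun 'I_k -> 'I_m.+1}} {i} :
  (0 < val (y i))%N -> succ_at i (pred_at y i) y.
Proof.
move=> yi_gt0; apply/forallP => l; rewrite ffunE /= inordK; last first.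
  by rewrite ltnS (leq_trans (leq_subr _ _)) // -ltnS.
by case: (l =P i) => [->|_]; rewrite ?subnK ?subn0 ?addn0.
Qed.

Lemma count_rate_departure_gt0 {s y i} :
  valid s -> succ_at i y s.1 -> 0 < count_rate s (y, s.2).
Proof.
move=> Vs succ; rewrite /count_rate (bigD1 i) //=; apply: ltr_wpDr.
  by rewrite sumr_ge0 // => l _; rewrite count_term_ge0.
have lam_ge0 := ltW (lam_gt0 i).
rewrite /count_term succ eqxx mul1r; apply: ltr_wpDl.
  by rewrite ?mulr_ge0 ?ler0n ?theta_ge0.
have -> : val (s.1 i) = (val (y i)).+1.
  by move/forallP/(_ i)/eqP: succ; rewrite eqxx addn1.
by rewrite mulr_gt0 ?ltr0n.
Qed.

Definition origin : state := ([ffun => ord0], pers_origin).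

Definition potential (w : state) : nat := (nsum w.1 + pers_rank w.2)%N.

Lemma rate_descent s : valid s -> s != origin ->
  exists t, [/\ valid t, (potential t < potential s)%N & 0 < rate s t].
Proof.
case: s => y a Vs s_neq_o.
have [/existsP[i yi_gt0] | /existsPn y0] := boolP [exists i, 0 < val (y i)]%N.
  have succ := succ_at_pred_at yi_gt0; have nsumE := nsum_succ_at succ.
  exists (pred_at y i, a); split.
  - by move: Vs; rewrite /valid /busy /= nsumE addSn => /ltnW.
  - by rewrite /potential /= nsumE addSn.
  - rewrite rateE; apply: ltr_wpDr; first by rewrite mulr_ge0 ?ler0n ?pers_rate_ge0.
    exact: count_rate_departure_gt0 Vs succ.
have [|j lt_rank rate_gt0] := pers_rate_descent (nsum y) a Vs.
  apply: contraNneq s_neq_o => ->; apply/eqP; congr (_, _).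
  apply/ffunP => i; rewrite ffunE.
  by apply/val_inj/eqP; rewrite -leqn0 leqNgt y0.
exists (y, lower_at a j); split.
- by apply: leq_trans Vs; rewrite leq_add2l busy_p_lower_at.
- by rewrite /potential ltn_add2l.
- by rewrite rateE eqxx mul1r; apply: ltr_wpDl; first exact: count_rate_ge0.
Qed.

Lemma valid_origin : valid origin.
Proof.
rewrite /valid /busy /nsum /= big1 ?add0n; first exact: pvalid_origin.
by move=> i _; rewrite ffunE.
Qed.

Theorem stationaryE pi : stationary R m k n lam mu alpha beta u v theta pi ->
  forall w, valid w -> pi w = normB R m k n lam mu alpha beta u v theta * weight w.
Proof.
case=> _ _ pi_sum1 balance.
apply: (reversible_stationaryE _ _ _ rate weight potential _ valid_origin) => //.
- by move=> s t Vs _; apply: rate_ge0.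
- exact: weight_gt0.
- by move=> s t _ _; apply: rate_detailed_balance.
- exact: rate_descent.
Qed.

Lemma sum_marginal (F : state -> R) x a : (x + busy_p a <= m)%N ->
  \sum_(w | valid w && (nsum w.1 == x) && (w.2 == a)) F w =
  \sum_(y | nsum y == x) F (y, a).
Proof.
move=> xm; transitivity (\sum_(y | nsum y == x) \sum_(b | b == a) F (y, b)); last first.
  by apply: eq_bigr => y _; rewrite big_pred1_eq.
rewrite pair_big_dep /=; apply: eq_big => [[y b]|[y b] _] //=.
have [-> | _] := eqVneq b a; last by rewrite !andbF.
have [nsum_y | _] := eqVneq (nsum y) x; last by rewrite andbF.
by rewrite /valid /busy /= nsum_y xm.
Qed.

Theorem marginalE pi : stationary R m k n lam mu alpha beta u v theta pi ->
  forall x a, (x + busy_p a <= m)%N ->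
  marginal R m k n pi x a =
    normB R m k n lam mu alpha beta u v theta * tp (x + busy_p a) * pw a
    * (rho_sum R k lam mu ^+ x / (x`!)%:R).
Proof.
move=> pi_stat x a xm; set B := normB R m k n lam mu alpha beta u v theta.
have termE y : nsum y == x ->
    B * weight (y, a) = B * tp (x + busy_p a) * pw a * count_weight y.
  by move=> /eqP nsum_y; rewrite weightE /= nsum_y; ring.
rewrite /marginal.
under eq_bigr => w /andP[/andP[Vw _] _] do rewrite (stationaryE pi pi_stat w Vw).
rewrite sum_marginal // (eq_bigr _ termE) -mulr_sumr /count_weight /nsum.
by rewrite sum_multinomial // (leq_trans (leq_addr _ _) xm).
Qed.

End MultiChannelModel.

Theorem corollary2 (R : realType) (m k n : nat)
  (lam mu : 'I_k -> R) (alpha beta u v : 'I_n -> R) (theta : nat -> R) :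
  (1 <= m)%N -> (1 <= k)%N -> (1 <= n)%N ->
  (forall i, 0 < lam i) -> (forall i, 0 < mu i) ->
  (forall j, 0 < alpha j) -> (forall j, 0 < beta j) ->
  (forall j, 0 < u j) -> (forall j, 0 < v j) ->
  (forall b, (b <= m)%N -> 0 <= theta b <= 1) ->
  (forall b, (b < m)%N -> 0 < theta b) ->
  theta m = 0 ->
  (forall pi : state m k n -> R,
     stationary R m k n lam mu alpha beta u v theta pi ->
     forall (x : nat) (a : {ffun 'I_n -> act}), (x + busy_p a <= m)%N ->
       marginal R m k n pi x a =
         normB R m k n lam mu alpha beta u v theta
         * theta_prod R theta (x + busy_p a)
         * pers_weight R n alpha beta u v a
         * (rho_sum R k lam mu ^+ x / (x`!)%:R))
  /\
  (forall pi : pstate n -> R,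
     pstationary R m n alpha beta u v theta pi ->
     forall a : pstate n, pvalid m n a ->
       pi a = pnormB R m n alpha beta u v theta
              * theta_prod R theta (busy_p a) * pers_weight R n alpha beta u v a).
Proof.
move=> _ _ _ lam_gt0 mu_gt0 alpha_gt0 beta_gt0 u_gt0 v_gt0 theta_01 theta_gt0 _.
have theta_ge0 b : (b <= m)%N -> 0 <= theta b by move=> /theta_01/andP[].
split=> pi pi_stat.
  exact: marginalE.
by move=> a Va; rewrite -mulrA; exact: pstationaryE.
Qed.
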